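(* Let $\mathcal{V}_R:\mathcal{B}(\mathcal{H}_R)\to\mathcal{B}(\mathcal{H}_{R'})$ and $\mathcal{W}_A:\mathcal{B}(\mathcal{H}_A)\to\mathcal{B}(\mathcal{H}_{A'})$ be local isometric channels, $\mathcal{V}_R(X)=V X V^\dagger$, $\mathcal{W}_A(Y)=WYW^\dagger$ with $V,W$ isometries, that jointly commute with the $G$-twirl, i.e. $(\mathcal{V}_R\otimes\mathcal{W}_A)\circ\mathcal{G}_{RA}=\mathcal{G}_{R'A'}\circ(\mathcal{V}_R\otimes\mathcal{W}_A)$. Then $H_{\mathcal{V}(\eta)}(\mathcal{W}(\rho))=H_\eta(\rho)$ for every pair of quantum states $\eta$ on $\mathcal{H}_R$ and $\rho$ on $\mathcal{H}_A$.
   Context: $G$ is a compact group with normalized Haar measure $dg$. Each finite-dimensional quantum system $X$ (here $R,A,R',A'$) carries a continuous unitary representation $U_X(g)$ on $\mathcal{H}_X$; bipartite systems carry the tensor product representation. The $G$-twirl on a system $X$ is $\mathcal{G}(M)=\int dg\, U_X(g) M U_X(g)^\dagger$; in particular $\mathcal{G}_{RA}(M)=\int dg\,(U_R(g)\otimes U_A(g))M(U_R(g)\otimes U_A(g))^\dagger$. For a positive operator $\Omega_{RA}$, the conditional min-entropy is $H_{\min}(R|A)_\Omega=-\log_2\inf_{X_A\ge 0}\{\mathrm{tr}[X_A]:\mathbb{1}_R\otimes X_A\ge\Omega_{RA}\}$. For a state $\eta$ on $R$ and a state $\tau$ on $A$, $H_\eta(\tau):=H_{\min}(R|A)_{\mathcal{G}(\eta\otimes\tau)}$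 (and analogously for $R',A'$). *)

From HB Require Import structures.
From mathcomp Require Import all_boot all_order all_algebra.
From mathcomp Require Import all_classical all_reals all_analysis.
From mathcomp.real_closed Require Import complex mxtens.
Set Implicit Arguments. Unset Strict Implicit. Unset Printing Implicit Defensive.
Import Order.TTheory GRing.Theory Num.Theory.
Import numFieldNormedType.Exports.
Local Open Scope ring_scope.
Local Open Scope classical_set_scope.

Definition qdag (R : realType) (m n : nat) (A : 'M[R[i]]_(m, n)) : 'M[R[i]]_(n, m) :=
  (map_mx (@Num.conj R[i]) A)^T.

(** Positive semidefinite (A >= 0). Over C, <v, A v> >= 0 for all v
    (the order on C: nonnegative real). *)
Definition qpsdmx (R : realType) (n : nat) (A : 'M[R[i]]_n) : Prop :=
  forall v : 'cV[R[i]]_n, 0 <= (qdag v *m A *m v) 0 0.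

Definition qloewner_ge (R : realType) (n : nat) (A B : 'M[R[i]]_n) : Prop :=
  qpsdmx (A - B).

Definition qdensity (R : realType) (n : nat) (A : 'M[R[i]]_n) : Prop :=
  qpsdmx A /\ \tr A = 1.

Definition qisometry (R : realType) (m n : nat) (V : 'M[R[i]]_(m, n)) : Prop :=
  qdag V *m V = 1%:M.

Definition qchan (R : realType) (m n : nat) (V : 'M[R[i]]_(m, n)) (X : 'M[R[i]]_n)
  : 'M[R[i]]_m := V *m X *m qdag V.

Record CompactGroup (R : realType) := {
  cg_T :> ptopologicalType;
  cg_mul : cg_T -> cg_T -> cg_T;
  cg_inv : cg_T -> cg_T;
  cg_one : cg_T;
  cg_mulA : forall x y z, cg_mul x (cg_mul y z) = cg_mul (cg_mul x y) z;
  cg_mul1g : forall x, cg_mul cg_one x = x;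
  cg_mulVg : forall x, cg_mul (cg_inv x) x = cg_one;
  cg_mul_cont : continuous (fun p : cg_T * cg_T => cg_mul p.1 p.2);
  cg_inv_cont : continuous cg_inv;
  cg_hausdorff : hausdorff_space cg_T;
  cg_compact : compact [set: cg_T];
  cg_haar : probability (g_sigma_algebraType (@open cg_T)) R;
  cg_haar_linv : forall (g : cg_T) (A : set (g_sigma_algebraType (@open cg_T))),
      measurable A -> cg_haar ((cg_mul g) @` A) = cg_haar A;
  cg_haar_rinv : forall (g : cg_T) (A : set (g_sigma_algebraType (@open cg_T))),
      measurable A -> cg_haar ((fun x => cg_mul x g) @` A) = cg_haar A
}.

Record urep (R : realType) (G : CompactGroup R) (n : nat) := {
  ur_fun :> G -> 'M[R[i]]_n;
  ur_unitary : forall g, ur_fun g *m qdag (ur_fun g) = 1%:M;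
  ur_hom : forall g h, ur_fun (cg_mul g h) = ur_fun g *m ur_fun h;
  ur_cont_re : forall i j, continuous (fun g : G => (complex.Re (ur_fun g i j) : R));
  ur_cont_im : forall i j, continuous (fun g : G => (complex.Im (ur_fun g i j) : R))
}.

Definition qhaar_mxint (R : realType) (G : CompactGroup R) (m n : nat)
  (f : G -> 'M[R[i]]_(m, n)) : 'M[R[i]]_(m, n) :=
  \matrix_(i, j)
    Complex (Rintegral (cg_haar G) setT
               (fun g : g_sigma_algebraType (@open G) => complex.Re (f g i j)))
            (Rintegral (cg_haar G) setT
               (fun g : g_sigma_algebraType (@open G) => complex.Im (f g i j))).

Definition qtwirl (R : realType) (G : CompactGroup R) (m n : nat)
  (UX : urep G m) (UY : urep G n) (M : 'M[R[i]]_(m * n)) : 'M[R[i]]_(m * n) :=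
  qhaar_mxint (fun g => (UX g *t UY g) *m M *m qdag (UX g *t UY g)).

Definition qlog2 (R : realType) (x : R) : R := ln x / ln 2.

Definition qHmin (R : realType) (m n : nat) (Omega : 'M[R[i]]_(m * n)) : R :=
  - qlog2 (inf [set complex.Re (\tr Y) | Y in
                 [set Y : 'M[R[i]]_n | qpsdmx Y /\ qloewner_ge (1%:M *t Y) Omega]]).

Definition qHent (R : realType) (G : CompactGroup R) (m n : nat)
  (UX : urep G m) (UY : urep G n) (eta : 'M[R[i]]_m) (tau : 'M[R[i]]_n) : R :=
  qHmin (qtwirl UX UY (eta *t tau)).

(* A local isometry V (x) W does not change the conditional min-entropy: a
   feasible operator Y' for (V (x) W) Omega (V (x) W)^dagger pulls back to the
   feasible W^dagger Y' W, whose trace is not larger, and a feasible Y for Omega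
   pushes forward to the feasible W Y W^dagger with the same trace; the defect
   of the latter splits off the positive term (P (x) W)(1 (x) Y)(P (x) W)^dagger,
   P = 1 - V V^dagger.  Covariance moves the twirl past V (x) W, so the two
   entropies are min-entropies of operators related by the local isometry. *)
From HB Require Import structures.
From mathcomp Require Import all_boot all_order all_algebra.
From mathcomp Require Import all_classical all_reals all_analysis.
From mathcomp.real_closed Require Import complex mxtens.
Import Order.TTheory GRing.Theory Num.Theory.
Local Open Scope ring_scope.
Local Open Scope classical_set_scope.

Section Infimum.
Set Implicit Arguments. Unset Strict Implicit.
Variable R : realType.

Lemma inf_le_dominated (A B : set R) :
  has_lbound A -> (forall y, B y -> exists2 x, A x & x <= y) ->
  B !=set0 -> inf A <= inf B.
Proof.
move=> lbA domBA neB; apply: lb_le_inf => // y /domBA [x Ax xy].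
exact: le_trans (ge_inf lbA Ax) xy.
Qed.

Lemma eq_inf_dominated (A B : set R) :
  has_lbound A -> has_lbound B ->
  (forall x, A x -> exists2 y, B y & y <= x) ->
  (forall y, B y -> exists2 x, A x & x <= y) -> inf A = inf B.
Proof.
move=> lbA lbB domAB domBA.
have [A0|/set0P neA] := eqVneq A set0.
  suff -> : B = set0 by rewrite A0.
  by apply/seteqP; split=> // y /domBA[x]; rewrite A0.
have [x Ax] := neA; have [y By _] := domAB x Ax.
by apply/le_anti; rewrite !inf_le_dominated //; exists y.
Qed.

End Infimum.

Section Adjoint.
Set Implicit Arguments. Unset Strict Implicit.
Variable R : realType.
Local Notation C := R[i].

Lemma qdagM m n p (A : 'M[C]_(m, n)) (B : 'M[C]_(n, p)) :
  qdag (A *m B) = qdag B *m qdag A.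
Proof. by rewrite /qdag map_mxM trmx_mul. Qed.

Lemma qdagK m n (A : 'M[C]_(m, n)) : qdag (qdag A) = A.
Proof. by apply/matrixP=> i j; rewrite /qdag !mxE conjCK. Qed.

Lemma qdagB m n (A B : 'M[C]_(m, n)) : qdag (A - B) = qdag A - qdag B.
Proof. by apply/matrixP=> i j; rewrite /qdag !mxE rmorphB. Qed.

Lemma qdag1 n : qdag (1%:M : 'M[C]_n) = 1%:M.
Proof. by apply/matrixP=> i j; rewrite /qdag !mxE rmorph_nat eq_sym. Qed.

Lemma qdagT m n p q (A : 'M[C]_(m, n)) (B : 'M[C]_(p, q)) :
  qdag (A *t B) = qdag A *t qdag B.
Proof. by rewrite /qdag map_mxT trmx_tens. Qed.

Lemma tensmxBl m n p q (A B : 'M[C]_(m, n)) (D : 'M[C]_(p, q)) :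
  (A - B) *t D = A *t D - B *t D.
Proof. by apply/matrixP=> i j; rewrite !mxE mulrBl. Qed.

Lemma tensmx11 m n : (1%:M : 'M[C]_m) *t (1%:M : 'M[C]_n) = 1%:M.
Proof.
apply/matrixP=> i j.
case: (mxtens_indexP i) => i0 i1; case: (mxtens_indexP j) => j0 j1.
rewrite tensmxE !mxE (inj_eq (can_inj (@mxtens_indexK m n))) xpair_eqE.
by case: (i0 == j0); case: (i1 == j1); rewrite ?mulr1 ?mulr0.
Qed.

Lemma qchan_tens m n p q (V : 'M[C]_(m, n)) (W : 'M[C]_(p, q)) X Y :
  qchan (V *t W) (X *t Y) = qchan V X *t qchan W Y.
Proof. by rewrite /qchan qdagT !tensmx_mul. Qed.

End Adjoint.

Section PositiveSemidefinite.
Set Implicit Arguments. Unset Strict Implicit.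
Variable R : realType.
Local Notation C := R[i].

Lemma qpsdmx_conj k n (B : 'M[C]_(k, n)) (A : 'M[C]_n) :
  qpsdmx A -> qpsdmx (B *m A *m qdag B).
Proof. by move=> psdA v; have := psdA (qdag B *m v); rewrite qdagM qdagK !mulmxA. Qed.

Lemma qpsdmxD n (A B : 'M[C]_n) : qpsdmx A -> qpsdmx B -> qpsdmx (A + B).
Proof. by move=> psdA psdB v; rewrite mulmxDr mulmxDl mxE addr_ge0. Qed.

Lemma qpsdmx_tr_ge0 n (A : 'M[C]_n) : qpsdmx A -> 0 <= \tr A.
Proof.
move=> psdA; apply: sumr_ge0 => i _; have := psdA (delta_mx i 0).
have -> : qdag (delta_mx i 0 : 'cV[C]_n) = delta_mx 0 i.
  by apply/matrixP=> a b; rewrite /qdag !mxE rmorph_nat andbC.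
by rewrite -rowE -colE !mxE.
Qed.

Lemma qpsdmx_Re_tr_ge0 n (A : 'M[C]_n) : qpsdmx A -> 0 <= complex.Re (\tr A).
Proof. by move=> /qpsdmx_tr_ge0; rewrite lecE => /andP[]. Qed.

Lemma big_mxtens_index m n (F : 'I_(m * n) -> C) :
  \sum_k F k = \sum_(i < m) \sum_(j < n) F (mxtens_index (i, j)).
Proof.
rewrite pair_big (reindex (@mxtens_index m n)) /=; first by apply: eq_bigr => -[].
by exists (@mxtens_unindex m n) => x _; rewrite ?mxtens_indexK ?mxtens_unindexK.
Qed.

Lemma qpsdmx_1tens m n (Y : 'M[C]_n) :
  qpsdmx Y -> qpsdmx ((1%:M : 'M[C]_m) *t Y).
Proof.
move=> psdY v; pose w i : 'cV[C]_n := \col_j v (mxtens_index (i, j)) 0.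
suff -> : (qdag v *m (1%:M *t Y) *m v) 0 0 = \sum_i (qdag (w i) *m Y *m w i) 0 0.
  by apply: sumr_ge0 => i _; apply: psdY.
rewrite mxE big_mxtens_index; apply: eq_bigr => i _; rewrite mxE.
apply: eq_bigr => j _; rewrite !mxE big_mxtens_index mulr_suml exchange_big /=.
rewrite mulr_suml; apply: eq_bigr => l _; rewrite (bigD1 i) //= big1 ?addr0.
  by rewrite !mxE !mxtens_indexK /= eqxx mul1r.
by move=> i' /negPf ne; rewrite !mxE !mxtens_indexK /= ne mul0r mulr0.
Qed.

End PositiveSemidefinite.

Section Isometry.
Set Implicit Arguments. Unset Strict Implicit.
Variable R : realType.
Local Notation C := R[i].
Variables m n : nat.
Variable W : 'M[C]_(m, n).
Hypothesis isoW : qisometry W.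

Definition compl_projmx : 'M[C]_m := 1%:M - W *m qdag W.

Lemma qdag_compl_projmx : qdag compl_projmx = compl_projmx.
Proof. by rewrite qdagB qdag1 qdagM qdagK. Qed.

Lemma compl_projmx_idem : compl_projmx *m compl_projmx = compl_projmx.
Proof.
rewrite mulmxBl mul1mx mulmxBr mulmx1 mulmxA -(mulmxA W) isoW mulmx1.
by rewrite opprB addrA subrK.
Qed.

Lemma tr_qdag_conj (Y : 'M[C]_m) :
  \tr (qdag W *m Y *m W) = \tr Y - \tr (compl_projmx *m Y *m qdag compl_projmx).
Proof.
rewrite qdag_compl_projmx [X in _ - X]mxtrace_mulC mulmxA compl_projmx_idem.
rewrite mulmxBl mul1mx raddfB opprB addrC subrK.
by rewrite mxtrace_mulC mulmxA.
Qed.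

Lemma Re_tr_qdag_conj_le (Y : 'M[C]_m) : qpsdmx Y ->
  complex.Re (\tr (qdag W *m Y *m W)) <= complex.Re (\tr Y).
Proof.
move=> /(qpsdmx_conj compl_projmx)/qpsdmx_Re_tr_ge0 ge0.
by rewrite tr_qdag_conj raddfB /= gerBl.
Qed.

Lemma qdag_qchanK k (X : 'M[C]_k) (K : 'M[C]_(m, k)) :
  qisometry K -> qdag K *m qchan K X *m K = X.
Proof. by move=> isoK; rewrite /qchan !mulmxA isoK mul1mx -mulmxA isoK mulmx1. Qed.

Lemma tr_conj_qdag (Y : 'M[C]_n) : \tr (W *m Y *m qdag W) = \tr Y.
Proof. by rewrite mxtrace_mulC mulmxA isoW mul1mx. Qed.

End Isometry.

Section MinEntropy.
Set Implicit Arguments. Unset Strict Implicit.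
Variable R : realType.
Local Notation C := R[i].
Variables m n m' n' : nat.
Variables (V : 'M[C]_(m', m)) (W : 'M[C]_(n', n)).
Hypotheses (isoV : qisometry V) (isoW : qisometry W).

Lemma qisometry_tens : qisometry (V *t W).
Proof. by rewrite /qisometry qdagT tensmx_mul isoV isoW tensmx11. Qed.

Lemma qloewner_ge_pullback (Om : 'M[C]_(m * n)) (Y : 'M[C]_n') :
  qloewner_ge (1%:M *t Y) (qchan (V *t W) Om) ->
  qloewner_ge (1%:M *t (qdag W *m Y *m W)) Om.
Proof.
move=> /(qpsdmx_conj (qdag (V *t W))); rewrite qdagK mulmxBr mulmxBl.
by rewrite (qdag_qchanK _ qisometry_tens) qdagT !tensmx_mul mulmx1 isoV.
Qed.

Lemma qloewner_ge_pushforward (Om : 'M[C]_(m * n)) (Y : 'M[C]_n) :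
  qpsdmx Y -> qloewner_ge (1%:M *t Y) Om ->
  qloewner_ge (1%:M *t (W *m Y *m qdag W)) (qchan (V *t W) Om).
Proof.
move=> psdY geY; set P := compl_projmx V; rewrite /qloewner_ge.
have -> : 1%:M *t (W *m Y *m qdag W) - qchan (V *t W) Om =
    (P *t W) *m (1%:M *t Y) *m qdag (P *t W) +
    (V *t W) *m (1%:M *t Y - Om) *m qdag (V *t W).
  rewrite mulmxBr mulmxBl -!/(qchan _ _) !qchan_tens /qchan.
  rewrite mulmx1 qdag_compl_projmx compl_projmx_idem // mulmx1.
  by rewrite /P /compl_projmx tensmxBl addrA subrK.
by apply: qpsdmxD; apply: qpsdmx_conj => //; apply: qpsdmx_1tens.
Qed.

Lemma qHmin_qchan_tens (Om : 'M[C]_(m * n)) :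
  qHmin (qchan (V *t W) Om) = qHmin Om.
Proof.
rewrite /qHmin; congr (- qlog2 _).
apply: eq_inf_dominated.
- by exists 0 => _ [Y [psdY _] <-]; apply: qpsdmx_Re_tr_ge0.
- by exists 0 => _ [Y [psdY _] <-]; apply: qpsdmx_Re_tr_ge0.
- move=> _ [Y [psdY geY] <-].
  exists (complex.Re (\tr (qdag W *m Y *m W))); last exact: Re_tr_qdag_conj_le.
  exists (qdag W *m Y *m W) => //; split; last exact: qloewner_ge_pullback.
  by have := qpsdmx_conj (qdag W) psdY; rewrite qdagK.
- move=> _ [Y [psdY geY] <-].
  exists (complex.Re (\tr (W *m Y *m qdag W))); last by rewrite tr_conj_qdag.
  exists (W *m Y *m qdag W) => //; split; first exact: qpsdmx_conj.
  exact: qloewner_ge_pushforward.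
Qed.

End MinEntropy.

Theorem lemma1 (R : realType) (G : CompactGroup R) (dR dA dR' dA' : nat)
  (UR : urep G dR) (UA : urep G dA) (UR' : urep G dR') (UA' : urep G dA')
  (V : 'M[R[i]]_(dR', dR)) (W : 'M[R[i]]_(dA', dA))
  (hV : qisometry V) (hW : qisometry W)
  (hcomm : forall M : 'M[R[i]]_(dR * dA),
      qchan (V *t W) (qtwirl UR UA M) = qtwirl UR' UA' (qchan (V *t W) M))
  (eta : 'M[R[i]]_dR) (rho : 'M[R[i]]_dA)
  (heta : qdensity eta) (hrho : qdensity rho) :
  qHent UR' UA' (qchan V eta) (qchan W rho) = qHent UR UA eta rho.
Proof.
by rewrite /qHent -(qHmin_qchan_tens hV hW) hcomm qchan_tens.
Qed.
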